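(* Let $P$ be a finite poset and let $E,F,E',F'$ be order filters of $P$. The following are equivalent: (1) $\mathcal{F}(E,F)=\mathcal{F}(E',F')$; (2) $\chi_{E'}$ and $\chi_{F'}$ are a pair of opposite (antipodal) vertices of the cube $\mathcal{F}(E,F)$; (3) $\chi_E+\chi_F=\chi_{E'}+\chi_{F'}$; (4) $E\cap F=E'\cap F'$ and $E\cup F=E'\cup F'$. In particular $\mathcal{F}(E,F)=\mathcal{F}(E\cap F,E\cup F)$, which is combinatorially a cube.
   Context: For a finite poset $P$, an order filter is a subset $F\subseteq P$ such that $a\in F$ and $a<_P b$ imply $b\in F$; $\chi_S\in\{0,1\}^P$ denotes the characteristic vector of $S\subseteq P$. The order polytope of $P$ is $\mathcal{O}(P)=\{x\in[0,1]^P: x_a\le x_b \text{ for all } a<_P b\}=\mathrm{conv}\{\chi_F: F \text{ an order filter}\}$. For order filters $E,F$, $\mathcal{F}(E,F)$ denotes the minimal face of $\mathcal{O}(P)$ containing $\chi_E$ and $\chi_F$. For comparable filters $E\subseteq F$ it is known that $\mathcal{F}(E,F)=\chi_E+\sum_{i=1}^d[0,\chi_{P'_i}]$ where $P'_1,\dots,P'_d$ are the connected components of $P|_{F\setminus E}$, a $d$-dimensional cube; two vertices of a cube are opposite if no proper face of the cube contains both. *)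

From HB Require Import structures.
From mathcomp Require Import all_boot all_order all_algebra.
Set Implicit Arguments. Unset Strict Implicit. Unset Printing Implicit Defensive.
Import Order.TTheory GRing.Theory Num.Theory.
Local Open Scope ring_scope.

Section OrderPolytope.
Variables (R : realFieldType) (d : Order.disp_t) (T : finPOrderType d).

Definition dotp (a x : T -> R) : R := \sum_(i : T) a i * x i.

Definition order_filter (F : {set T}) : Prop :=
  forall a b : T, a \in F -> (a < b)%O -> b \in F.

Definition chi (S : {set T}) : T -> R := fun i => if i \in S then 1 else 0.

Definition order_polytope (x : T -> R) : Prop :=
  (forall a, 0 <= x a <= 1) /\ (forall a b : T, (a < b)%O -> x a <= x b).

Definition face_of (Q G : (T -> R) -> Prop) : Prop :=
  exists (a : T -> R) (b : R),
    (forall x, Q x -> dotp a x <= b) /\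
    (forall x, G x <-> (Q x /\ dotp a x = b)).

Definition min_face (E F : {set T}) (x : T -> R) : Prop :=
  forall G, face_of order_polytope G -> G (chi E) -> G (chi F) -> G x.

Definition opposite_vertices (Q : (T -> R) -> Prop) (p q : T -> R) : Prop :=
  face_of Q (fun x => x = p) /\ face_of Q (fun x => x = q) /\
  forall G, face_of Q G -> G p -> G q -> forall x, Q x -> G x.

End OrderPolytope.

(* A face {x in Q | c.x = v} of a polytope Q on which c.x <= v is valid
   contains two points r, s of the polytope as soon as it contains two points
   p, q with r + s = p + q, since c.r + c.s = 2v forces c.r = c.s = v.  Hence
   the minimal face through chi E and chi F depends only on chi E + chi F,
   which encodes exactly E :&: F and E :|: F.  Conversely the minimal face is
   centrally symmetric about its centre (chi E + chi F) / 2: on it every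
   coordinate in E :&: F is 1, every coordinate outside E :|: F is 0 and
   coordinates that cannot be told apart by E and F are equal, and these
   constraints are preserved by x |-> chi E + chi F - x.  So chi E and chi F
   are antipodal in it, and any antipodal pair of it is 1 exactly on E :&: F
   and 0 exactly off E :|: F. *)
From Pilot Require Import Defs.
From HB Require Import structures.
From mathcomp Require Import all_boot all_order all_algebra.
From mathcomp Require Import lra.
From Stdlib Require Import FunctionalExtensionality.
Import Order.TTheory GRing.Theory Num.Theory.
Local Open Scope ring_scope.

Set Implicit Arguments. Unset Strict Implicit.

Section OrderPolytopeFaces.
Variables (R : realFieldType) (d : Order.disp_t) (T : finPOrderType d).
Local Notation O := (@order_polytope R d T).
Local Notation chi := (@Defs.chi R d T).

Definition antipode (p q x : T -> R) : T -> R := fun i => p i + q i - x i.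

Lemma dotp_antipode (c p q x : T -> R) :
  dotp c (antipode p q x) = dotp c p + dotp c q - dotp c x.
Proof.
rewrite /dotp -big_split -sumrB; apply: eq_bigr => i _.
by rewrite mulrBr mulrDr.
Qed.

Lemma dotp_delta i (x : T -> R) : dotp (fun j => (j == i)%:R) x = x i.
Proof.
rewrite /dotp (bigD1 i) //= eqxx mul1r big1 ?addr0 // => j /negbTE ->.
by rewrite mul0r.
Qed.

Lemma dotp_ndelta i (x : T -> R) : dotp (fun j => - (j == i)%:R) x = - x i.
Proof.
by rewrite -dotp_delta /dotp -sumrN; apply: eq_bigr => j _; rewrite mulNr.
Qed.

Lemma dotp_deltaB a b (x : T -> R) :
  dotp (fun j => (j == a)%:R - (j == b)%:R) x = x a - x b.
Proof.
by rewrite -!dotp_delta /dotp -sumrB; apply: eq_bigr => j _; rewrite mulrBl.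
Qed.

Lemma dotp0 (x : T -> R) : dotp (fun _ => 0) x = 0.
Proof. by rewrite /dotp big1 // => i _; rewrite mul0r. Qed.

Lemma chi_eq1 (S : {set T}) i : chi S i = 1 <-> i \in S.
Proof.
by rewrite /Defs.chi; case: (i \in S); split=> // /eqP; rewrite eq_sym oner_eq0.
Qed.

Lemma chi_eq0 (S : {set T}) i : chi S i = 0 <-> i \notin S.
Proof.
by rewrite /Defs.chi; case: (i \in S); split=> // /eqP; rewrite oner_eq0.
Qed.

Lemma order_filterI (E F : {set T}) :
  order_filter E -> order_filter F -> order_filter (E :&: F).
Proof.
move=> hE hF a b; rewrite !inE => /andP[aE aF] ab.
by rewrite (hE _ _ aE ab) (hF _ _ aF ab).
Qed.

Lemma order_filterU (E F : {set T}) :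
  order_filter E -> order_filter F -> order_filter (E :|: F).
Proof.
move=> hE hF a b; rewrite !inE => /orP[aE|aF] ab.
  by rewrite (hE _ _ aE ab).
by rewrite (hF _ _ aF ab) orbT.
Qed.

Lemma order_polytope_chi (S : {set T}) : order_filter S -> O (chi S).
Proof.
move=> hS; split=> [a|a b ab]; rewrite /Defs.chi.
  by case: (a \in S); rewrite ?lexx ?ler01.
case aS: (a \in S); first by rewrite (hS a b aS ab).
by case: (b \in S); rewrite ?lexx ?ler01.
Qed.

Lemma face_ofP (Q : (T -> R) -> Prop) (c : T -> R) v :
  (forall x, Q x -> O x) -> (forall x, O x -> dotp c x <= v) ->
  face_of Q (fun x => Q x /\ dotp c x = v).
Proof. by move=> QO cv; exists c, v; split=> // x /QO; apply: cv. Qed.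

Lemma face_of_sub (Q G : (T -> R) -> Prop) x : face_of Q G -> G x -> Q x.
Proof. by case=> c [v [_ GQ]] /GQ []. Qed.

Lemma face_of_ext (Q Q' G : (T -> R) -> Prop) :
  (forall x, Q x <-> Q' x) -> face_of Q G -> face_of Q' G.
Proof.
move=> QQ' [c [v [cv GQ]]]; exists c, v; split=> [x /QQ'|x]; first exact: cv.
by rewrite GQ QQ'.
Qed.

Lemma opposite_vertices_ext (Q Q' : (T -> R) -> Prop) p q :
  (forall x, Q x <-> Q' x) ->
  opposite_vertices Q p q -> opposite_vertices Q' p q.
Proof.
move=> QQ' [fp [fq pq]]; have Q'Q x : Q' x <-> Q x by rewrite QQ'.
split; [|split]; try exact: face_of_ext fp; try exact: face_of_ext fq.
by move=> G /(face_of_ext Q'Q) GQ Gp Gq x /QQ'; apply: pq.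
Qed.

Lemma face_of_antipode (Q G : (T -> R) -> Prop) p q r :
  face_of Q G -> G p -> G q -> Q r -> Q (antipode p q r) -> G r.
Proof.
case=> c [v [cv GQ]] /GQ [_ cp] /GQ [_ cq] Qr Qr'.
apply/GQ; split=> //; have := cv _ Qr'; have := cv _ Qr.
by rewrite dotp_antipode cp cq; lra.
Qed.

Lemma ler_sum_eq (f g : T -> R) :
  (forall i, f i <= g i) -> \sum_i f i = \sum_i g i -> forall i, f i = g i.
Proof.
move=> fg sfg i; apply/esym/subr0_eq.
apply: (psumr_eq0P (P := predT) (F := fun j => g j - f j)) => // [j _|].
  by rewrite subr_ge0.
by rewrite sumrB sfg subrr.
Qed.

(* chi S is the unique maximiser over O(P) of the functional that is +1 on S
   and -1 off S. *)
Lemma face_of_chi (Q : (T -> R) -> Prop) (S : {set T}) :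
  (forall x, Q x -> O x) -> Q (chi S) -> face_of Q (fun x => x = chi S).
Proof.
move=> QO QS; pose c i : R := if i \in S then 1 else -1.
have c_le x : O x -> forall i, c i * x i <= c i * chi S i.
  move=> [x01 _] i; have /andP[] := x01 i; rewrite /Defs.chi /c.
  by case: (i \in S); rewrite ?mul1r ?mulN1r ?mulr1 ?mulr0; lra.
exists c, (dotp c (chi S)); split=> [x /QO Ox|x].
  by apply: ler_sum => i _; apply: c_le.
split=> [->//|[Qx cx]]; apply: functional_extensionality => i.
have := ler_sum_eq (c_le _ (QO _ Qx)) cx i; have /andP[] := (QO _ Qx).1 i.
rewrite /Defs.chi /c.
by case: (i \in S); rewrite ?mul1r ?mulN1r ?mulr1 ?mulr0; lra.
Qed.

Lemma opposite_vertices_dotp (Q : (T -> R) -> Prop) p q (c : T -> R) v :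
  (forall x, Q x -> O x) -> opposite_vertices Q p q ->
  (forall x, O x -> dotp c x <= v) -> dotp c p = v -> dotp c q = v ->
  forall x, Q x -> dotp c x = v.
Proof.
move=> QO [fp [fq pq]] cv cp cq x Qx.
have Gp : Q p /\ dotp c p = v by split=> //; apply: face_of_sub fp _.
have Gq : Q q /\ dotp c q = v by split=> //; apply: face_of_sub fq _.
by have [] := pq _ (face_ofP QO cv) Gp Gq x Qx.
Qed.

Section MinimalFace.
Variables (E F : {set T}) (hE : order_filter E) (hF : order_filter F).
Local Notation Q := (@min_face R d T E F).

Lemma min_face_chil : Q (chi E). Proof. by move=> G _ GE _. Qed.
Lemma min_face_chir : Q (chi F). Proof. by move=> G _ _ GF. Qed.

Lemma min_face_dotp (c : T -> R) v x :
  (forall y, O y -> dotp c y <= v) ->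
  dotp c (chi E) = v -> dotp c (chi F) = v -> Q x -> dotp c x = v.
Proof.
move=> cv cE cF Qx.
have [] // := Qx _ (face_ofP (fun _ => id) cv).
  by split=> //; apply: order_polytope_chi.
by split=> //; apply: order_polytope_chi.
Qed.

Lemma min_face_sub x : Q x -> O x.
Proof.
move=> Qx; apply: Qx; try exact: order_polytope_chi.
by exists (fun _ => 0), 0; split=> [y _|y]; rewrite dotp0 //; split=> [|[]].
Qed.

Lemma min_face_one x i : Q x -> i \in E -> i \in F -> x i = 1.
Proof.
move=> Qx iE iF; rewrite -(dotp_delta i x); apply: min_face_dotp Qx.
- by move=> y [y01 _]; rewrite dotp_delta; case/andP: (y01 i).
- by rewrite dotp_delta; apply/chi_eq1.
- by rewrite dotp_delta; apply/chi_eq1.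
Qed.

Lemma min_face_zero x i : Q x -> i \notin E -> i \notin F -> x i = 0.
Proof.
move=> Qx iE iF; apply: oppr_inj.
rewrite oppr0 -(dotp_ndelta i x); apply: min_face_dotp Qx.
- by move=> y [y01 _]; rewrite dotp_ndelta oppr_le0; case/andP: (y01 i).
- by rewrite dotp_ndelta; apply/eqP; rewrite oppr_eq0; apply/eqP/chi_eq0.
- by rewrite dotp_ndelta; apply/eqP; rewrite oppr_eq0; apply/eqP/chi_eq0.
Qed.

Lemma min_face_eq x a b : Q x -> (a < b)%O ->
  (a \in E) = (b \in E) -> (a \in F) = (b \in F) -> x a = x b.
Proof.
move=> Qx ab abE abF; apply: subr0_eq; rewrite -(dotp_deltaB a b x).
apply: min_face_dotp Qx.
- by move=> y [_ y_mono]; rewrite dotp_deltaB subr_le0; apply: y_mono.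
- by rewrite dotp_deltaB /Defs.chi abE subrr.
- by rewrite dotp_deltaB /Defs.chi abF subrr.
Qed.

Lemma order_polytope_antipode x : Q x -> O (antipode (chi E) (chi F) x).
Proof.
move=> Qx; have [x01 x_mono] := min_face_sub Qx; rewrite /antipode.
split=> [i|a b ab].
  have /andP[? ?] := x01 i; rewrite /Defs.chi.
  case iE: (i \in E); case iF: (i \in F);
    rewrite ?(min_face_one Qx iE iF) /=;
    rewrite ?(min_face_zero Qx (negbT iE) (negbT iF));
    apply/andP; split; lra.
have /andP[? ?] := x01 a; have /andP[? ?] := x01 b; have := x_mono a b ab.
have := (order_polytope_chi hE).2 a b ab.
have := (order_polytope_chi hF).2 a b ab.
move: (min_face_eq Qx ab); rewrite /Defs.chi.
case: (a \in E); case: (b \in E); case: (a \in F); case: (b \in F) => /= xab;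
  first [lra | have := xab erefl erefl; lra].
Qed.

Lemma min_face_antipode x : Q x -> Q (antipode (chi E) (chi F) x).
Proof.
move=> Qx G [c [v [cv GO]]] GE GF; have fG : face_of O G by exists c, v.
have [_ cE] := (GO _).1 GE; have [_ cF] := (GO _).1 GF.
apply/GO; split; first exact: order_polytope_antipode.
by rewrite dotp_antipode cE cF (min_face_dotp cv cE cF Qx) addrK.
Qed.

Lemma min_face_opposite_vertices : opposite_vertices Q (chi E) (chi F).
Proof.
split; first exact: face_of_chi min_face_sub min_face_chil.
split; first exact: face_of_chi min_face_sub min_face_chir.
move=> G fG GE GF x Qx.
exact: face_of_antipode fG GE GF Qx (min_face_antipode Qx).
Qed.

Section OppositeVertices.
Variables (E' F' : {set T}).
Hypothesis opp : opposite_vertices Q (chi E') (chi F').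

Let Q_E' : Q (chi E').
Proof. by case: opp => fE' _; apply: face_of_sub fE' _. Qed.
Let Q_F' : Q (chi F').
Proof. by case: opp => _ [fF' _]; apply: face_of_sub fF' _. Qed.

Lemma opposite_vertices_setI : E :&: F = E' :&: F'.
Proof.
apply/setP=> i; rewrite !inE; apply/andP/andP=> [[iE iF]|[iE' iF']].
  by split; apply/chi_eq1; [exact: min_face_one Q_E' iE iF|
                            exact: min_face_one Q_F' iE iF].
have one_i x : Q x -> x i = 1.
  move=> Qx; rewrite -(dotp_delta i x).
  apply: (opposite_vertices_dotp (@min_face_sub) opp) Qx.
  - by move=> y [y01 _]; rewrite dotp_delta; case/andP: (y01 i).
  - by rewrite dotp_delta; apply/chi_eq1.
  - by rewrite dotp_delta; apply/chi_eq1.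
by split; apply/chi_eq1/one_i; [exact: min_face_chil|exact: min_face_chir].
Qed.

Lemma opposite_vertices_setU : E :|: F = E' :|: F'.
Proof.
apply/setP=> i; apply: negb_inj; rewrite !inE !negb_or.
apply/andP/andP=> [[iE iF]|[iE' iF']].
  by split; apply/chi_eq0; [exact: min_face_zero Q_E' iE iF|
                            exact: min_face_zero Q_F' iE iF].
have zero_i x : Q x -> x i = 0.
  move=> Qx; apply: oppr_inj; rewrite oppr0 -(dotp_ndelta i x).
  apply: (opposite_vertices_dotp (@min_face_sub) opp) Qx.
  - by move=> y [y01 _]; rewrite dotp_ndelta oppr_le0; case/andP: (y01 i).
  - by rewrite dotp_ndelta; apply/eqP; rewrite oppr_eq0; apply/eqP/chi_eq0.
  - by rewrite dotp_ndelta; apply/eqP; rewrite oppr_eq0; apply/eqP/chi_eq0.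
by split; apply/chi_eq0/zero_i; [exact: min_face_chil|exact: min_face_chir].
Qed.

End OppositeVertices.
End MinimalFace.

Lemma chi_sum_eqP (E F E' F' : {set T}) :
  (forall i, chi E i + chi F i = chi E' i + chi F' i) <->
  E :&: F = E' :&: F' /\ E :|: F = E' :|: F'.
Proof.
split=> [sum_eq|[EFI EFU] i].
  split; apply/setP=> i; have := sum_eq i; rewrite !inE /Defs.chi;
  by case: (i \in E); case: (i \in F); case: (i \in E'); case: (i \in F')
    => //= ?; exfalso; lra.
have /setP/(_ i) := EFI; have /setP/(_ i) := EFU; rewrite !inE /Defs.chi.
by case: (i \in E); case: (i \in F); case: (i \in E'); case: (i \in F')
  => //= _ _; lra.
Qed.

Lemma min_face_sub_of_chi_sum (E F E' F' : {set T}) :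
  order_filter E -> order_filter F ->
  (forall i, chi E i + chi F i = chi E' i + chi F' i) ->
  forall x : T -> R, min_face E F x -> min_face E' F' x.
Proof.
move=> hE hF sum_eq x Qx G fG GE' GF'.
have antipodeE : antipode (chi E') (chi F') (chi E) = chi F.
  apply: functional_extensionality => i.
  by rewrite /antipode -sum_eq addrAC subrr add0r.
have antipodeF : antipode (chi E') (chi F') (chi F) = chi E.
  by apply: functional_extensionality => i; rewrite /antipode -sum_eq addrK.
apply: Qx => //; apply: (face_of_antipode fG GE' GF');
  rewrite ?antipodeE ?antipodeF; exact: order_polytope_chi.
Qed.

Lemma min_face_eq_of_chi_sum (E F E' F' : {set T}) :
  order_filter E -> order_filter F -> order_filter E' -> order_filter F' ->
  (forall i, chi E i + chi F i = chi E' i + chi F' i) ->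
  forall x : T -> R, min_face E F x <-> min_face E' F' x.
Proof.
move=> hE hF hE' hF' sum_eq x; split; first exact: min_face_sub_of_chi_sum.
by apply: min_face_sub_of_chi_sum => // i; rewrite sum_eq.
Qed.

End OrderPolytopeFaces.

Theorem corollary3p2 (R : realFieldType) (d : Order.disp_t) (T : finPOrderType d)
    (E F E' F' : {set T})
    (hE : order_filter E) (hF : order_filter F)
    (hE' : order_filter E') (hF' : order_filter F') :
  [<-> (forall x : T -> R, min_face E F x <-> min_face E' F' x);
       opposite_vertices (min_face E F) (chi R E') (chi R F');
       (forall i : T, chi R E i + chi R F i = chi R E' i + chi R F' i);
       E :&: F = E' :&: F' /\ E :|: F = E' :|: F']
  /\ (forall x : T -> R, min_face E F x <-> min_face (E :&: F) (E :|: F) x).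
Proof.
split; last first.
  apply: min_face_eq_of_chi_sum (order_filterI hE hF) (order_filterU hE hF) _
    => //.
  by apply/chi_sum_eqP; split; apply/setP=> i; rewrite !inE;
    case: (i \in E); case: (i \in F).
tfae.
- move=> EF.
  apply: opposite_vertices_ext (min_face_opposite_vertices R hE' hF').
  by move=> x; split=> /EF.
- move=> opp; apply/chi_sum_eqP.
  split; [exact: opposite_vertices_setI opp|exact: opposite_vertices_setU opp].
- by move/chi_sum_eqP.
- by move/chi_sum_eqP/(min_face_eq_of_chi_sum hE hF hE' hF').
Qed.
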